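(* Let $n\ge 3$ and let $x_1,x_2,x_3,x_4$ be distinct vertices of $H_2(n,n-1)$ such that $x_1\sim x_2$, $x_2\sim x_3$, $x_3\sim x_4$ and $x_4\sim x_1$. Then $x_1+x_2=x_3+x_4$ and $x_1+x_4=x_2+x_3$.
   Context: $H_2(n,n-1)$ is the simple undirected graph with vertex set $\mathbb{Z}_2^n$ in which $x\sim y$ (adjacent) iff their Hamming distance $|\{i:x_i\ne y_i\}|$ is at least $n-1$. Addition is in $\mathbb{Z}_2^n$. *)

From mathcomp Require Import all_boot.
Set Implicit Arguments. Unset Strict Implicit. Unset Printing Implicit Defensive.

(* Vertices of H_2(n,n-1): Z_2^n, represented as boolean vectors of length n. *)
Definition vtx (n : nat) := {ffun 'I_n -> bool}.

Definition vadd (n : nat) (x y : vtx n) : vtx n := [ffun i => x i (+) y i].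

Definition hdist (n : nat) (x y : vtx n) : nat := #|[set i | x i != y i]|.

(* Adjacency in H_2(n,n-1): Hamming distance at least n-1 (simple graph, so x != y). *)
Definition hadj (n : nat) (x y : vtx n) : bool := (x != y) && (n.-1 <= hdist x y).

(* Two adjacent vertices agree in at most one coordinate, so along a path
   x ~ y ~ z with x != z no coordinate is constant: if x, y, z agreed at i,
   then x and z would differ from y everywhere else, forcing x = z.  Hence at
   every coordinate the four bits around the 4-cycle contain no three
   cyclically consecutive equal ones, and a finite check on such bit patterns
   gives both identities coordinatewise. *)

From mathcomp Require Import all_boot zify.

Set Implicit Arguments.
Unset Strict Implicit.
Unset Printing Implicit Defensive.

Lemma hdist_agree n (x y : vtx n) :
  #|[set i | x i == y i]| + hdist x y = n.
Proof.
rewrite /hdist -[RHS]card_ord -(cardsC [set i | x i == y i]).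
by congr (_ + _); apply: eq_card => i; rewrite !inE.
Qed.

Lemma hadj_agree_le1 n (x y : vtx n) : hadj x y -> #|[set i | x i == y i]| <= 1.
Proof. by case/andP=> _; have := hdist_agree x y; lia. Qed.

Lemma hadj_agree_eq n (x y : vtx n) i j :
  hadj x y -> x i = y i -> x j = y j -> i = j.
Proof.
move=> /hadj_agree_le1/card_le1_eqP agree_eq xyi xyj.
by apply: agree_eq; rewrite inE; apply/eqP.
Qed.

Lemma hadj2_nonconst n (x y z : vtx n) i :
  hadj x y -> hadj y z -> x != z -> (x i != y i) || (y i != z i).
Proof.
move=> hxy hyz; apply: contraNT => /norP[/negPn/eqP xyi /negPn/eqP yzi].
apply/eqP/ffunP => j; have [->|ji] := eqVneq j i; first by rewrite xyi.
have xyj : x j != y j by apply: contra ji => /eqP xyj; rewrite (hadj_agree_eq hxy xyj xyi).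
have yzj : y j != z j by apply: contra ji => /eqP yzj; rewrite (hadj_agree_eq hyz yzj yzi).
by move: xyj yzj; case: (x j); case: (y j); case: (z j).
Qed.

Lemma addb_cycle4 (a b c d : bool) :
  (a != b) || (b != c) -> (b != c) || (c != d) ->
  (c != d) || (d != a) -> (d != a) || (a != b) ->
  a (+) b = c (+) d /\ a (+) d = b (+) c.
Proof. by case: a; case: b; case: c; case: d. Qed.

Theorem lemma5p4 (n : nat) (x1 x2 x3 x4 : vtx n) :
  3 <= n ->
  uniq [:: x1; x2; x3; x4] ->
  hadj x1 x2 -> hadj x2 x3 -> hadj x3 x4 -> hadj x4 x1 ->
  vadd x1 x2 = vadd x3 x4 /\ vadd x1 x4 = vadd x2 x3.
Proof.
move=> _ /= /and4P[] /norP[_ /norP[x13 _]] /norP[_ /norP[x24 _]] _ _ h12 h23 h34 h41.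
have nonconst i := addb_cycle4
  (hadj2_nonconst i h12 h23 x13) (hadj2_nonconst i h23 h34 x24)
  (hadj2_nonconst i h34 h41 (contra_neq esym x13))
  (hadj2_nonconst i h41 h12 (contra_neq esym x24)).
by split; apply/ffunP => i; rewrite !ffunE; case: (nonconst i).
Qed.
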